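(* Let $F$ be a Hecke--Maa\ss{} cusp form for $\mathrm{SL}_3(\mathbb{Z})$ with Hecke eigenvalues $A_F(m,n)$, and let $\Xi_F$ be as defined below and, for $c\in\mathbb{N}$, $d\in(\mathbb{Z}/c\mathbb{Z})^\times$, $\Re(w)<0$, \[\Xi(c,\pm d;-w) \coloneqq c^{-w} \sum_{b \in \mathbb{Z}/c\mathbb{Z}} e\Big(\pm \frac{bd}{c}\Big) \sum_{m = 1}^{\infty} \frac{e(\frac{bm}{c})}{m^{1 - w}}.\] For $\ell\in\mathbb{N}$, $w_1=u_1+iv_1$, $w_2=u_2+iv_2$ with $u_1,u_2<0$, and any signs $\pm_1,\pm_2$, \[\sum_{c \mid \ell} c^{2w_2 - 1} \sum_{d \in (\mathbb{Z}/c\mathbb{Z})^{\times}} \Xi(c,\pm_1 d;-w_1) \Xi_F\Big(c,\pm_2 d,\frac{\ell}{c};-w_2\Big) = \ell^{1 - w_1 - w_2} \sum_{n_1 \mid \ell} \sum_{m,n_2 = 1}^{\infty} \frac{A_F(n_2,n_1)}{m^{1 - w_1} n_2^{1 - w_2} n_1^{1 - 2w_2}} S\Big(m, \mp_1 \pm_2 n_2; \frac{\ell}{n_1}\Big).\]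
   Context: $e(x)=e^{2\pi ix}$, $S(m,n;c)$ is the Kloosterman sum. For $c,\ell\in\mathbb{N}$, $d\in(\mathbb{Z}/c\mathbb{Z})^\times$, $\Re(w)<0$: $\Xi_F(c,\pm d,\ell;-w) \coloneqq c \sum_{n_1 \mid c\ell} \sum_{n_2 \ge1} \frac{A_F(n_2,n_1)}{n_2 n_1} S(d\ell,\pm n_2; \frac{c\ell}{n_1}) (\frac{n_2 n_1^2}{c^3 \ell})^w$. The sign $\mp_1\pm_2$ denotes the product of $-(\pm_1 1)$ and $(\pm_2 1)$. *)

From Stdlib Require Import Reals ZArith List Arith Bool.
From Coquelicot Require Import Coquelicot.
Open Scope R_scope.

Definition csum {T : Type} (l : list T) (f : T -> C) : C :=
  fold_right (fun a acc => Cplus (f a) acc) (RtoC 0) l.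

Definition divisors (n : nat) : list nat :=
  filter (fun d => Nat.eqb (n mod d) 0) (seq 1 n).

(** Representatives 0..c-1 of the units of Z/cZ (for c = 1: [0]). *)
Definition units_mod (c : nat) : list nat :=
  filter (fun x => Nat.eqb (Nat.gcd x c) 1) (seq 0 c).

Definition e (x : R) : C := (cos (2 * PI * x), sin (2 * PI * x)).

Definition cpow (x : R) (w : C) : C :=
  let t := ln x in (exp (Re w * t) * cos (Im w * t), exp (Re w * t) * sin (Im w * t)).

Definition CSeries (a : nat -> C) : C :=
  (Series (fun n => Re (a n)), Series (fun n => Im (a n))).

(** Kloosterman sum S(m,n;c) = sum_{x mod c, (x,c)=1} e((m x + n xbar)/c). *)
Definition Kloosterman (m n : Z) (c : nat) : C :=
  csum (units_mod c) (fun x =>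
    csum (filter (fun y => Nat.eqb ((x * y) mod c) (1 mod c)) (seq 0 c)) (fun y =>
      e (IZR (m * Z.of_nat x + n * Z.of_nat y) / INR c))).

Definition sgn (b : bool) : Z := if b then 1%Z else (-1)%Z.

(** Xi c k w  represents  Xi(c, k; -w)
    = c^{-w} sum_{b mod c} e(b k / c) sum_{m>=1} e(b m / c) / m^{1-w}. *)
Definition Xi (c : nat) (k : Z) (w : C) : C :=
  Cmult (cpow (INR c) (Copp w))
    (csum (seq 0 c) (fun b =>
       Cmult (e (IZR (Z.of_nat b * k) / INR c))
         (CSeries (fun j => let m := S j in
            Cdiv (e (INR (b * m) / INR c)) (cpow (INR m) (Cminus (RtoC 1) w)))))).

(** XiF A c sg d l w represents  Xi_F(c, sg d, l; -w)
    = c sum_{n1 | c l} sum_{n2>=1} A(n2,n1)/(n2 n1) S(d l, sg n2; c l / n1)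
        (n2 n1^2 / (c^3 l))^w. *)
Definition XiF (A : nat -> nat -> C) (c : nat) (sg d : Z) (l : nat) (w : C) : C :=
  Cmult (RtoC (INR c))
    (csum (divisors (c * l)) (fun n1 =>
       CSeries (fun j => let n2 := S j in
         Cmult (Cmult (Cdiv (A n2 n1) (RtoC (INR n2 * INR n1)))
                      (Kloosterman (d * Z.of_nat l) (sg * Z.of_nat n2) ((c * l) / n1)))
               (cpow (INR n2 * INR n1 ^ 2 / (INR c ^ 3 * INR l)) w)))).

(** Properties of the normalized Fourier/Hecke coefficients A_F(m1,m2) of a
    Hecke--Maass cusp form F for SL_3(Z) (Goldfeld, "Automorphic forms and
    L-functions for GL(n,R)", Thm 6.4.11, Prop 9.?, Rankin--Selberg bound). *)
Definition hecke_sum (n : nat) (P : nat -> nat -> nat -> C) : C :=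
  csum (divisors n) (fun d0 =>
    csum (divisors (n / d0)%nat) (fun d1 => P d0 d1 (n / (d0 * d1))%nat)).

Record HeckeMaassCoeffs (A : nat -> nat -> C) : Prop := {
  hm_one : A 1%nat 1%nat = RtoC 1;
  hm_mult : forall m1 m2 m1' m2' : nat,
    (1 <= m1)%nat -> (1 <= m2)%nat -> (1 <= m1')%nat -> (1 <= m2')%nat ->
    Nat.gcd (m1 * m2) (m1' * m2') = 1%nat ->
    A (m1 * m1')%nat (m2 * m2')%nat = Cmult (A m1 m2) (A m1' m2');
  hm_hecke1 : forall n m1 m2 : nat,
    (1 <= n)%nat -> (1 <= m1)%nat -> (1 <= m2)%nat ->
    Cmult (A n 1%nat) (A m1 m2) =
    hecke_sum n (fun d0 d1 d2 =>
      if Nat.eqb (m1 mod d1) 0 && Nat.eqb (m2 mod d2) 0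
      then A (m1 * d0 / d1)%nat (m2 * d1 / d2)%nat else RtoC 0);
  hm_hecke2 : forall n m1 m2 : nat,
    (1 <= n)%nat -> (1 <= m1)%nat -> (1 <= m2)%nat ->
    Cmult (A 1%nat n) (A m1 m2) =
    hecke_sum n (fun d0 d1 d2 =>
      if Nat.eqb (m1 mod d1) 0 && Nat.eqb (m2 mod d2) 0
      then A (m1 * d2 / d1)%nat (m2 * d0 / d2)%nat else RtoC 0);
  hm_dual : forall m1 m2 : nat, A m2 m1 = Cconj (A m1 m2);
  hm_rankin_selberg : exists K : R, forall X : nat,
    fold_right Rplus 0 (map (fun m1 => fold_right Rplus 0 (map (fun m2 =>
      if Nat.leb (m1 * m1 * m2) X then Cmod (A m1 m2) ^ 2 else 0)
      (seq 1 X))) (seq 1 X)) <= K * INR X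
}.

(* Both sides equal the sum over [M >= 1] of
     [rhs_coeff M = l^(1-w1-w2) sum_(n1 | l) M^(w1-1) n1^(2w2-1)
                      sum_(n2 >= 1) A(n2,n1) n2^(w2-1) S(M, mp_1 pm_2 n2; l/n1)].
   On the right this is a rearrangement of absolutely convergent series: the [n2]-series converges
   by the Rankin--Selberg bound, and the [m]-series because [Re w1 < 0].
   On the left, orthogonality of additive characters turns [Xi(c, pm_1 d; -w1)] into a sum over the
   [m = mp_1 d (mod c)], so for each [m] only one [d] survives, and it is a unit iff [(m, c) = 1].
   For that [d] we have [d l/c = mp_1 M (mod l/n1)] with [M = (l/c) m], so by periodicity of
   Kloosterman sums the [c]-th term is the sum of [rhs_coeff M] over the [M = (l/c) m], [(m, c) = 1].
   Finally every [M >= 1] is of this form for exactly one [c | l], namely [c = l / (M, l)]. *)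

From Stdlib Require Import Reals ZArith List Arith Bool Lia Lra Permutation.
From Coquelicot Require Import Coquelicot.
Open Scope R_scope.

(** * Finite sums *)

Lemma csum_nil {T} (f : T -> C) : csum nil f = 0%C.
Proof. reflexivity. Qed.

Lemma csum_cons {T} (a : T) l f : csum (a :: l) f = (f a + csum l f)%C.
Proof. reflexivity. Qed.

Lemma csum_app {T} (l1 l2 : list T) f : csum (l1 ++ l2) f = (csum l1 f + csum l2 f)%C.
Proof.
  induction l1 as [|a l1 IH]; [simpl; ring|].
  rewrite <- app_comm_cons, !csum_cons, IH. ring.
Qed.

Lemma csum_ext {T} (l : list T) f g :
  (forall x, In x l -> f x = g x) -> csum l f = csum l g.
Proof.
  induction l as [|a l IH]; intros H; [reflexivity|].
  rewrite !csum_cons, H by (left; reflexivity).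
  rewrite IH; [reflexivity|]. intros; apply H; right; assumption.
Qed.

Lemma csum_0 {T} (l : list T) : csum l (fun _ => 0%C) = 0%C.
Proof. induction l as [|a l IH]; [reflexivity|]. rewrite csum_cons, IH. ring. Qed.

Lemma csum_scal_l {T} (l : list T) k f : csum l (fun x => k * f x)%C = (k * csum l f)%C.
Proof. induction l as [|a l IH]; [simpl; ring|]. rewrite !csum_cons, IH. ring. Qed.

Lemma csum_scal_r {T} (l : list T) k f : csum l (fun x => f x * k)%C = (csum l f * k)%C.
Proof. induction l as [|a l IH]; [simpl; ring|]. rewrite !csum_cons, IH. ring. Qed.

Lemma csum_filter {T} (P : T -> bool) l f :
  csum (filter P l) f = csum l (fun x => if P x then f x else 0%C).
Proof.
  induction l as [|a l IH]; [reflexivity|]. simpl filter.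
  rewrite csum_cons. destruct (P a); rewrite ?csum_cons, IH; [reflexivity|ring].
Qed.

Lemma csum_map {T U} (g : T -> U) l f : csum (map g l) f = csum l (fun x => f (g x)).
Proof. induction l as [|a l IH]; [reflexivity|]. simpl map. rewrite !csum_cons, IH. reflexivity. Qed.

Lemma csum_Permutation {T} (l l' : list T) f : Permutation l l' -> csum l f = csum l' f.
Proof.
  induction 1; rewrite ?csum_cons; try congruence. ring.
Qed.

Lemma csum_1 {T} (l : list T) : csum l (fun _ => 1%C) = RtoC (INR (length l)).
Proof.
  induction l as [|a l IH]; [reflexivity|].
  rewrite csum_cons, IH. simpl length. rewrite S_INR, RtoC_plus. ring.
Qed.

Lemma csum_indicator (l : list nat) (a : nat) (v : C) :
  NoDup l -> In a l -> csum l (fun x => if x =? a then v else 0%C) = v.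
Proof.
  induction 1 as [|x l Hx Hl IH]; intros Ha; [contradiction|].
  rewrite csum_cons. destruct Ha as [<-|Ha].
  - rewrite Nat.eqb_refl, (csum_ext _ _ (fun _ => 0%C)), csum_0; [ring|].
    intros y Hy. destruct (Nat.eqb_spec y x); congruence.
  - rewrite IH by assumption. destruct (Nat.eqb_spec x a); [congruence|ring].
Qed.

Definition rsum {T} (l : list T) (f : T -> R) : R :=
  fold_right (fun a acc => f a + acc) 0 l.

Lemma rsum_cons {T} (a : T) l f : rsum (a :: l) f = f a + rsum l f.
Proof. reflexivity. Qed.

Lemma rsum_app {T} (l1 l2 : list T) f : rsum (l1 ++ l2) f = rsum l1 f + rsum l2 f.
Proof.
  induction l1 as [|a l1 IH]; [unfold rsum; simpl; ring|].
  rewrite <- app_comm_cons, !rsum_cons, IH. ring.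
Qed.

Lemma rsum_ext {T} (l : list T) f g :
  (forall x, In x l -> f x = g x) -> rsum l f = rsum l g.
Proof.
  induction l as [|a l IH]; intros H; [reflexivity|].
  rewrite !rsum_cons, H by (left; reflexivity).
  rewrite IH; [reflexivity|]. intros; apply H; right; assumption.
Qed.

Lemma rsum_map {T U} (g : T -> U) l f : rsum (map g l) f = rsum l (fun x => f (g x)).
Proof. induction l as [|a l IH]; [reflexivity|]. simpl map. rewrite !rsum_cons, IH. reflexivity. Qed.

Lemma fold_right_Rplus_map {T} (l : list T) f : fold_right Rplus 0 (map f l) = rsum l f.
Proof. induction l as [|a l IH]; [reflexivity|]. simpl. rewrite IH. reflexivity. Qed.

Lemma rsum_scal_r {T} (l : list T) f k : rsum l (fun x => f x * k) = rsum l f * k.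
Proof. induction l as [|a l IH]; [unfold rsum; simpl; ring|]. rewrite !rsum_cons, IH. ring. Qed.

Lemma rsum_const {T} (l : list T) k : rsum l (fun _ => k) = INR (length l) * k.
Proof.
  induction l as [|a l IH]; [unfold rsum; simpl; ring|].
  simpl length. rewrite rsum_cons, IH, S_INR. ring.
Qed.

Lemma rsum_le {T} (l : list T) f g :
  (forall x, In x l -> f x <= g x) -> rsum l f <= rsum l g.
Proof.
  induction l as [|a l IH]; intros H; [unfold rsum; simpl; lra|].
  rewrite !rsum_cons. apply Rplus_le_compat; [|apply IH]; intros; apply H; simpl; auto.
Qed.

Lemma rsum_nonneg {T} (l : list T) f : (forall x, In x l -> 0 <= f x) -> 0 <= rsum l f.
Proof.
  intros H. replace 0 with (rsum l (fun _ => 0)) by (rewrite rsum_const; ring).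
  now apply rsum_le.
Qed.

Lemma rsum_ge_term {T} (l : list T) f a :
  (forall x, In x l -> 0 <= f x) -> In a l -> f a <= rsum l f.
Proof.
  induction l as [|b l IH]; intros H Ha; [contradiction|]. rewrite rsum_cons.
  destruct Ha as [->|Ha].
  - enough (0 <= rsum l f) by lra. apply rsum_nonneg; intros; apply H; simpl; auto.
  - enough (f a <= rsum l f) by (specialize (H b (or_introl eq_refl)); lra).
    apply IH; auto. intros; apply H; simpl; auto.
Qed.

Lemma sum_n_rsum (a : nat -> R) N : sum_n a N = rsum (seq 0 (S N)) a.
Proof.
  induction N as [|N IH].
  - rewrite sum_O. unfold rsum; simpl. ring.
  - rewrite sum_Sn, IH, (seq_S (S N)), rsum_app. unfold rsum at 3; simpl. unfold plus; simpl. ring.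
Qed.

Lemma Cmod_csum_le {T} (l : list T) f : Cmod (csum l f) <= rsum l (fun x => Cmod (f x)).
Proof.
  induction l as [|a l IH].
  - rewrite csum_nil, Cmod_0. unfold rsum; simpl; lra.
  - rewrite csum_cons, rsum_cons. eapply Rle_trans; [apply Cmod_triangle|lra].
Qed.

Lemma Cmod_csum_le_length {T} (l : list T) f B :
  (forall x, In x l -> Cmod (f x) <= B) -> Cmod (csum l f) <= INR (length l) * B.
Proof.
  intros H. eapply Rle_trans; [apply Cmod_csum_le|].
  rewrite <- rsum_const. now apply rsum_le.
Qed.

(** * Complex series *)

Lemma sum_n_Re (a : nat -> C) n : Re (sum_n a n) = sum_n (fun k => Re (a k)) n.
Proof. induction n as [|n IH]; [now rewrite !sum_O|]. rewrite !sum_Sn, <- IH. reflexivity. Qed.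

Lemma sum_n_Im (a : nat -> C) n : Im (sum_n a n) = sum_n (fun k => Im (a k)) n.
Proof. induction n as [|n IH]; [now rewrite !sum_O|]. rewrite !sum_Sn, <- IH. reflexivity. Qed.

Lemma is_series_Re (a : nat -> C) (s : C) :
  is_series a s -> is_series (fun n => Re (a n)) (Re s).
Proof.
  intros H. apply filterlim_ext with (fun n => Re (sum_n a n)); [intros; apply sum_n_Re|].
  eapply filterlim_comp; [exact H|]. apply filterlim_locally. intros eps.
  exists eps. intros y [Hre _]. exact Hre.
Qed.

Lemma is_series_Im (a : nat -> C) (s : C) :
  is_series a s -> is_series (fun n => Im (a n)) (Im s).
Proof.
  intros H. apply filterlim_ext with (fun n => Im (sum_n a n)); [intros; apply sum_n_Im|].
  eapply filterlim_comp; [exact H|]. apply filterlim_locally. intros eps.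
  exists eps. intros y [_ Him]. exact Him.
Qed.

Lemma CSeries_unique (a : nat -> C) (s : C) : is_series a s -> CSeries a = s.
Proof.
  intros H. unfold CSeries.
  rewrite (is_series_unique _ _ (is_series_Re _ _ H)), (is_series_unique _ _ (is_series_Im _ _ H)).
  destruct s; reflexivity.
Qed.

Lemma is_series_C_unique (a : nat -> C) s1 s2 : is_series a s1 -> is_series a s2 -> s1 = s2.
Proof. intros H1 H2. rewrite <- (CSeries_unique _ _ H1). now apply CSeries_unique. Qed.

Lemma CSeries_ext (a b : nat -> C) : (forall n, a n = b n) -> CSeries a = CSeries b.
Proof. intros H. unfold CSeries. f_equal; apply Series_ext; intros; now rewrite H. Qed.

Lemma is_series_CSeries_Cmod (a : nat -> C) :
  ex_series (fun n => Cmod (a n)) -> is_series a (CSeries a).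
Proof.
  intros H. destruct (ex_series_le a (fun n => Cmod (a n)) (fun n => Rle_refl _) H) as [s Hs].
  now rewrite (CSeries_unique _ _ Hs).
Qed.

Lemma is_series_Cmult_l (a : nat -> C) k s :
  is_series a s -> is_series (fun n => k * a n)%C (k * s)%C.
Proof. apply (is_series_scal k a s). Qed.

Lemma is_series_Cmult_r (a : nat -> C) k s :
  is_series a s -> is_series (fun n => a n * k)%C (s * k)%C.
Proof.
  intros H. rewrite Cmult_comm.
  apply is_series_ext with (fun n => k * a n)%C; [intros; apply Cmult_comm|].
  now apply is_series_Cmult_l.
Qed.

Lemma CSeries_Cmult_l (a : nat -> C) k s :
  is_series a s -> CSeries (fun n => k * a n)%C = (k * s)%C.
Proof. intros H. apply CSeries_unique. now apply is_series_Cmult_l. Qed.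

Lemma is_series_C0 : is_series (fun _ : nat => RtoC 0) (RtoC 0).
Proof.
  apply filterlim_ext with (fun _ => RtoC 0); [|apply filterlim_const].
  intros n. induction n as [|n IH]; [now rewrite sum_O|].
  rewrite sum_Sn, <- IH. change (RtoC 0 = RtoC 0 + RtoC 0)%C. ring.
Qed.

Lemma is_series_csum {T} (l : list T) (F : T -> nat -> C) (S : T -> C) :
  (forall x, In x l -> is_series (F x) (S x)) ->
  is_series (fun n => csum l (fun x => F x n)) (csum l S).
Proof.
  induction l as [|a l IH]; intros H.
  - exact is_series_C0.
  - apply (is_series_plus (F a) (fun n => csum l (fun x => F x n)));
      [apply H; left; reflexivity|].
    apply IH. intros; apply H; right; assumption.
Qed.

Lemma sum_n_csum (a : nat -> C) n : sum_n a n = csum (seq 0 (S n)) a.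
Proof.
  induction n as [|n IH].
  - rewrite sum_O. simpl. change (a 0%nat = a 0%nat + 0)%C. ring.
  - rewrite sum_Sn, IH, (seq_S (S n)), csum_app, csum_cons, csum_nil.
    change (csum (seq 0 (S n)) a + a (S n) = csum (seq 0 (S n)) a + (a (S n) + 0))%C. ring.
Qed.

Lemma csum_block_last (a : nat -> C) q k : (1 <= q)%nat ->
  (forall M, (q * k < M < q * k + q)%nat -> a M = 0%C) ->
  csum (seq (q * k) q) (fun i => a (S i)) = a (q * k + q)%nat.
Proof.
  intros Hq H. replace q with (S (q - 1)) at 2 by lia.
  rewrite seq_S, csum_app, csum_cons, csum_nil.
  rewrite (csum_ext _ _ (fun _ => 0%C)), csum_0.
  - replace (S (q * k + (q - 1))) with (q * k + q)%nat by lia. ring.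
  - intros x Hx. apply in_seq in Hx. apply H. lia.
Qed.

Lemma is_series_mul_index (a : nat -> C) q s : (1 <= q)%nat ->
  (forall M, M mod q <> 0%nat -> a M = 0%C) ->
  is_series (fun i => a (S i)) s -> is_series (fun i => a (q * S i)%nat) s.
Proof.
  intros Hq Ha H.
  assert (Hgap : forall k M, (q * k < M < q * k + q)%nat -> a M = 0%C).
  { intros k M HM. apply Ha. intros HM'. apply Nat.Div0.mod_divides in HM' as [j ->].
    destruct (Nat.lt_ge_cases j (S k)); nia. }
  assert (E : forall n,
    sum_n (fun i => a (q * S i)%nat) n = sum_n (fun i => a (S i)) (q * S n - 1)).
  { intros n. rewrite !sum_n_csum. replace (S (q * S n - 1)) with (q * S n)%nat by lia.
    induction n as [|n IH].
    - assert (B := csum_block_last a q 0 Hq (Hgap 0%nat)).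
      rewrite Nat.mul_0_r, Nat.add_0_l in B.
      rewrite Nat.mul_1_r, B. simpl. rewrite Nat.mul_1_r. apply Cplus_0_r.
    - rewrite (seq_S (S n)), csum_app, csum_cons, csum_nil, IH.
      replace (q * S (S n))%nat with (q * S n + q)%nat by lia.
      rewrite seq_app, csum_app, !Nat.add_0_l, csum_block_last by (assumption || apply Hgap).
      rewrite Cplus_0_r. f_equal. f_equal. lia. }
  apply filterlim_ext with (fun n => sum_n (fun i => a (S i)) (q * S n - 1));
    [intros; symmetry; apply E|].
  eapply filterlim_comp; [|exact H].
  apply eventually_subseq. intros n. nia.
Qed.

(** * Additive characters *)

Lemma e_add x y : (e x * e y)%C = e (x + y).
Proof.
  unfold e, Cmult; simpl. replace (2 * PI * (x + y)) with (2 * PI * x + 2 * PI * y) by ring.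
  rewrite cos_plus, sin_plus. f_equal; ring.
Qed.

Lemma e_IZR k : e (IZR k) = 1%C.
Proof.
  unfold e. assert (Hs : sin (PI * IZR k) = 0) by (apply sin_eq_0_1; exists k; ring).
  replace (2 * PI * IZR k) with (2 * (PI * IZR k)) by ring.
  rewrite cos_2a_sin, sin_2a, Hs. unfold RtoC. f_equal; ring.
Qed.

Lemma e_0 : e 0 = 1%C.
Proof. exact (e_IZR 0). Qed.

Lemma e_eq_1 y : e y = 1%C -> exists k, y = IZR k.
Proof.
  unfold e, RtoC. intros H. injection H as Hcos _.
  replace (2 * PI * y) with (2 * (PI * y)) in Hcos by ring. rewrite cos_2a_sin in Hcos.
  assert (Hs : sin (PI * y) = 0) by nra. apply sin_eq_0_0 in Hs as [k Hk]. exists k.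
  pose proof PI_RGT_0. apply Rmult_eq_reg_l with PI; lra.
Qed.

Lemma Cmod_e x : Cmod (e x) = 1.
Proof.
  unfold e, Cmod; simpl fst; simpl snd. pose proof (sin2_cos2 (2 * PI * x)) as H.
  unfold Rsqr in H. rewrite <- sqrt_1. f_equal. simpl. lra.
Qed.

Lemma e_mod (q : nat) (a b : Z) : (1 <= q)%nat -> (Z.of_nat q | a - b)%Z ->
  e (IZR a / INR q) = e (IZR b / INR q).
Proof.
  intros Hq [k Hk]. replace a with (b + k * Z.of_nat q)%Z by lia.
  rewrite plus_IZR, mult_IZR, <- INR_IZR_INZ.
  replace ((IZR b + IZR k * INR q) / INR q) with (IZR b / INR q + IZR k)
    by (field; apply not_0_INR; lia).
  rewrite <- e_add, e_IZR. apply Cmult_1_r.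
Qed.

(* A geometric sum with ratio [e(t/c)], which is [1] exactly when [c | t]. *)
Lemma csum_e_mod (c : nat) (t : Z) : (1 <= c)%nat ->
  csum (seq 0 c) (fun b => e (IZR (Z.of_nat b * t) / INR c)) =
  if (t mod Z.of_nat c =? 0)%Z then RtoC (INR c) else RtoC 0.
Proof.
  intros Hc. assert (Hc0 : INR c <> 0) by (apply not_0_INR; lia).
  set (g := fun b : nat => e (IZR (Z.of_nat b * t) / INR c)).
  set (z := e (IZR t / INR c)).
  assert (gS : forall b, g (S b) = (g b * z)%C).
  { intros b. unfold g, z. rewrite e_add, Nat2Z.inj_succ, Z.mul_succ_l, plus_IZR.
    f_equal. field. assumption. }
  assert (gc : g c = 1%C).
  { unfold g. rewrite mult_IZR, <- INR_IZR_INZ, <- (e_IZR t). f_equal. field. assumption. }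
  set (S0 := csum (seq 0 c) g).
  assert (Htele : (S0 * z)%C = S0).
  { assert (E1 : csum (seq 0 (S c)) g = (S0 + 1)%C).
    { rewrite seq_S, csum_app, csum_cons, csum_nil. simpl. rewrite gc. unfold S0. ring. }
    assert (E2 : csum (seq 0 (S c)) g = (1 + S0 * z)%C).
    { simpl seq. unfold S0. rewrite csum_cons, <- seq_shift, csum_map, <- csum_scal_r.
      unfold g at 1. simpl. rewrite Rdiv_0_l, e_0. f_equal. apply csum_ext. intros b _. apply gS. }
    rewrite E1 in E2. apply (f_equal (fun u => u - 1)%C) in E2. ring_simplify in E2.
    rewrite <- E2. ring. }
  destruct (Z.eqb_spec (t mod Z.of_nat c) 0) as [H0|H0].
  - apply Z.mod_divide in H0 as [k ->]; [|lia].
    unfold S0, g. rewrite (csum_ext _ _ (fun _ => 1%C)), csum_1, length_seq; [reflexivity|].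
    intros b _. rewrite Z.mul_assoc, mult_IZR, <- (INR_IZR_INZ c), <- (e_IZR (Z.of_nat b * k)).
    f_equal. field. assumption.
  - assert (Hz : (z - 1)%C <> 0%C).
    { intros Hz. apply H0. destruct (e_eq_1 (IZR t / INR c)) as [k Hk].
      { apply (f_equal (fun u => u + 1)%C) in Hz. ring_simplify in Hz. exact Hz. }
      replace t with (k * Z.of_nat c)%Z; [apply Z.mod_mul; lia|].
      apply eq_IZR. rewrite mult_IZR, <- INR_IZR_INZ, <- Hk. field. assumption. }
    transitivity ((S0 * z - S0) / (z - 1))%C; [field; exact Hz|].
    rewrite Htele. unfold Cdiv. ring.
Qed.

(** * Complex powers *)

Lemma cpow_add x w v : cpow x (w + v)%C = (cpow x w * cpow x v)%C.
Proof.
  unfold cpow, Cmult, Re, Im; simpl.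
  rewrite !Rmult_plus_distr_r, exp_plus, cos_plus, sin_plus. f_equal; ring.
Qed.

Lemma cpow_0 x : cpow x 0%C = 1%C.
Proof.
  unfold cpow, Re, Im; simpl. rewrite !Rmult_0_l, exp_0, cos_0, sin_0.
  unfold RtoC; f_equal; ring.
Qed.

Lemma cpow_1 x : 0 < x -> cpow x 1%C = RtoC x.
Proof.
  intros Hx. unfold cpow, Re, Im; simpl.
  rewrite Rmult_1_l, Rmult_0_l, exp_ln, cos_0, sin_0 by assumption.
  unfold RtoC; f_equal; ring.
Qed.

Lemma cpow_mul x y w : 0 < x -> 0 < y -> cpow (x * y) w = (cpow x w * cpow y w)%C.
Proof.
  intros Hx Hy. unfold cpow, Cmult, Re, Im; simpl. rewrite ln_mult by assumption.
  rewrite !Rmult_plus_distr_l, exp_plus, cos_plus, sin_plus. f_equal; ring.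
Qed.

Lemma cpow_neq_0 x w : cpow x w <> 0%C.
Proof.
  intros H. apply C1_nz. rewrite <- (cpow_0 x), <- (Cplus_opp_r w), cpow_add, H. ring.
Qed.

Lemma cpow_opp x w : cpow x (- w)%C = (/ cpow x w)%C.
Proof.
  assert (H : (cpow x w * cpow x (- w))%C = 1%C) by (rewrite <- cpow_add, Cplus_opp_r; apply cpow_0).
  rewrite <- (Cmult_1_l (cpow x (- w))), <- (Cinv_l (cpow x w)), <- Cmult_assoc, H
    by apply cpow_neq_0.
  apply Cmult_1_r.
Qed.

Lemma cpow_inv x w : 0 < x -> cpow (/ x) w = (/ cpow x w)%C.
Proof.
  intros Hx. rewrite <- cpow_opp. unfold cpow, Re, Im. rewrite ln_Rinv by assumption.
  simpl. f_equal; f_equal; f_equal; ring.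
Qed.

Lemma cpow_sub x w v : cpow x (w - v)%C = (cpow x w / cpow x v)%C.
Proof. unfold Cminus. rewrite cpow_add, cpow_opp. reflexivity. Qed.

Lemma cpow_2w x w : cpow x (2 * w)%C = (cpow x w * cpow x w)%C.
Proof.
  rewrite <- cpow_add. f_equal. destruct w. unfold Cmult, Cplus, RtoC; simpl. f_equal; ring.
Qed.

Lemma Cmod_cpow x w : Cmod (cpow x w) = exp (Re w * ln x).
Proof.
  unfold Cmod, cpow; simpl fst; simpl snd. pose proof (sin2_cos2 (Im w * ln x)) as H.
  set (E := exp _). set (c := cos _) in *. set (s := sin _) in *.
  replace ((E * c) ^ 2 + (E * s) ^ 2) with (Rsqr E).
  - apply sqrt_Rsqr. left; apply exp_pos.
  - unfold Rsqr in *. transitivity (E * E * (s * s + c * c)); [rewrite H|]; ring.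
Qed.

Lemma Cmod_cpow_sub_1 x w : Cmod (cpow x (w - 1)%C) = Rpower x (Re w - 1).
Proof. rewrite Cmod_cpow. reflexivity. Qed.

Lemma cpow_1_sub x w : 0 < x -> cpow x (1 - w)%C = (RtoC x / cpow x w)%C.
Proof. intros Hx. rewrite cpow_sub, cpow_1 by assumption. reflexivity. Qed.

Lemma cpow_sub_1 x w : 0 < x -> cpow x (w - 1)%C = (cpow x w / RtoC x)%C.
Proof. intros Hx. rewrite cpow_sub, cpow_1 by assumption. reflexivity. Qed.

Lemma Cinv_cpow_1_sub x w : (/ cpow x (1 - w))%C = cpow x (w - 1)%C.
Proof. rewrite <- cpow_opp. f_equal. ring. Qed.

Lemma cpow_sqr_div_cube x y z w : 0 < x -> 0 < y -> 0 < z ->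
  cpow (x ^ 2 / (y ^ 3 * z)) w =
  (cpow x w * cpow x w / (cpow y w * cpow y w * cpow y w * cpow z w))%C.
Proof.
  intros Hx Hy Hz.
  replace (x ^ 2 / (y ^ 3 * z)) with (x * x * / (y * y * y * z)) by (field; lra).
  rewrite !cpow_mul, cpow_inv, !cpow_mul;
    try (apply Rinv_0_lt_compat); repeat apply Rmult_lt_0_compat; try assumption.
  reflexivity.
Qed.

(** * Kloosterman sums *)

Lemma Kloosterman_mod_l q a a' b : (1 <= q)%nat -> (Z.of_nat q | a - a')%Z ->
  Kloosterman a b q = Kloosterman a' b q.
Proof.
  intros Hq [k Hk]. unfold Kloosterman.
  apply csum_ext; intros x _. apply csum_ext; intros y _.
  apply e_mod; [assumption|]. exists (k * Z.of_nat x)%Z. nia.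
Qed.

Definition opp_mod (q x : nat) : nat := if x =? 0 then 0%nat else (q - x)%nat.

Lemma opp_mod_lt q x : (1 <= q)%nat -> (x < q)%nat -> (opp_mod q x < q)%nat.
Proof. unfold opp_mod. destruct (Nat.eqb_spec x 0); lia. Qed.

Lemma opp_modK q x : (x < q)%nat -> opp_mod q (opp_mod q x) = x.
Proof.
  unfold opp_mod. destruct (Nat.eqb_spec x 0); [now rewrite Nat.eqb_refl|].
  destruct (Nat.eqb_spec (q - x) 0); lia.
Qed.

Lemma opp_mod_Z q x : (x < q)%nat ->
  exists k, Z.of_nat (opp_mod q x) = (- Z.of_nat x + Z.of_nat q * k)%Z.
Proof. unfold opp_mod. destruct (Nat.eqb_spec x 0); [exists 0%Z | exists 1%Z]; lia. Qed.

Lemma gcd_opp_mod q x : (x < q)%nat -> Nat.gcd (opp_mod q x) q = Nat.gcd x q.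
Proof.
  intros Hx. unfold opp_mod. destruct (Nat.eqb_spec x 0) as [->|]; [reflexivity|].
  rewrite <- (Nat.gcd_sub_diag_r (q - x) q) by lia. replace (q - (q - x))%nat with x by lia.
  rewrite Nat.gcd_comm, (Nat.gcd_sub_diag_r x q) by lia. reflexivity.
Qed.

Lemma opp_mod_mul_mod q x y : (x < q)%nat -> (y < q)%nat ->
  ((opp_mod q x * opp_mod q y) mod q = (x * y) mod q)%nat.
Proof.
  intros Hx Hy. unfold opp_mod.
  destruct (Nat.eqb_spec x 0), (Nat.eqb_spec y 0); subst; rewrite ?Nat.mul_0_l, ?Nat.mul_0_r;
    [reflexivity..|].
  rewrite <- (Nat.Div0.mod_add ((q - x) * (q - y)) (x + y) q),
    <- (Nat.Div0.mod_add (x * y) q q).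
  f_equal. nia.
Qed.

Lemma csum_opp_mod q (F : nat -> C) : (1 <= q)%nat ->
  csum (seq 0 q) F = csum (seq 0 q) (fun x => F (opp_mod q x)).
Proof.
  intros Hq. rewrite <- (csum_map (opp_mod q)). apply csum_Permutation.
  apply NoDup_Permutation; [apply seq_NoDup| |].
  - apply NoDup_map_NoDup_ForallPairs; [|apply seq_NoDup].
    intros a b Ha Hb E. apply in_seq in Ha, Hb.
    rewrite <- (opp_modK q a), <- (opp_modK q b) by lia. congruence.
  - intros x. rewrite in_map_iff, in_seq. split.
    + intros Hx. exists (opp_mod q x). rewrite opp_modK by lia.
      split; [reflexivity|]. apply in_seq. pose proof (opp_mod_lt q x Hq). lia.
    + intros [y [<- Hy]]. apply in_seq in Hy. pose proof (opp_mod_lt q y Hq). lia.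
Qed.

Lemma Kloosterman_opp q a b : (1 <= q)%nat -> Kloosterman (- a) (- b) q = Kloosterman a b q.
Proof.
  intros Hq. unfold Kloosterman, units_mod. rewrite !csum_filter, (csum_opp_mod q _ Hq).
  apply csum_ext. intros x Hx. apply in_seq in Hx.
  rewrite gcd_opp_mod by lia. destruct (Nat.gcd x q =? 1); [|reflexivity].
  rewrite !csum_filter, (csum_opp_mod q _ Hq). apply csum_ext. intros y Hy. apply in_seq in Hy.
  rewrite opp_mod_mul_mod by lia. destruct (_ =? _); [|reflexivity].
  symmetry. apply e_mod; [assumption|].
  destruct (opp_mod_Z q x) as [kx ->]; [lia|]. destruct (opp_mod_Z q y) as [ky ->]; [lia|].
  exists (a * kx + b * ky)%Z. ring.
Qed.

Lemma Kloosterman_sign_move q s a a' b : (1 <= q)%nat -> (Z.of_nat q | sgn s * a + a')%Z ->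
  Kloosterman a b q = Kloosterman a' (- sgn s * b)%Z q.
Proof.
  intros Hq Hd. destruct s; simpl sgn in *.
  - rewrite (Kloosterman_mod_l q a (- a') b Hq).
    + replace b with (- (-1 * b))%Z at 1 by ring. apply Kloosterman_opp. assumption.
    + replace (a - - a')%Z with (1 * a + a')%Z by ring. assumption.
  - rewrite (Kloosterman_mod_l q a a' b Hq); [f_equal; ring|].
    destruct Hd as [k Hk]. exists (- k)%Z. lia.
Qed.

Lemma length_units_mod_le q : (length (units_mod q) <= q)%nat.
Proof.
  unfold units_mod. eapply Nat.le_trans; [apply filter_length_le|]. rewrite length_seq. lia.
Qed.

Lemma Cmod_Kloosterman_le a b q : Cmod (Kloosterman a b q) <= INR q * INR q.
Proof.
  unfold Kloosterman. eapply Rle_trans; [apply Cmod_csum_le_length with (B := INR q)|].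
  - intros x _. eapply Rle_trans.
    + apply Cmod_csum_le_length with (B := 1). intros; rewrite Cmod_e; lra.
    + rewrite Rmult_1_r. apply le_INR.
      eapply Nat.le_trans; [apply filter_length_le|]. rewrite length_seq. lia.
  - apply Rmult_le_compat_r; [apply pos_INR|]. apply le_INR, length_units_mod_le.
Qed.

(** * Convergence estimates *)

Lemma ex_series_nonneg_bounded (a : nat -> R) M :
  (forall n, 0 <= a n) -> (forall N, sum_n a N <= M) -> ex_series a.
Proof.
  intros Ha HM. destruct (ex_finite_lim_seq_incr (sum_n a) M) as [s Hs]; [|assumption|].
  - intros n. rewrite sum_Sn. specialize (Ha (S n)). change (sum_n a n <= sum_n a n + a (S n)). lra.
  - exists s. exact Hs.
Qed.

Lemma ln_ge_1_sub_inv x : 0 < x -> 1 - / x <= ln x.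
Proof.
  intros Hx. assert (Hinv : 0 < / x) by (apply Rinv_0_lt_compat; assumption).
  assert (H : ln (/ x) <= / x - 1).
  { rewrite <- (ln_exp (/ x - 1)). apply ln_le; [assumption|].
    pose proof (exp_ineq1_le (/ x - 1)). lra. }
  rewrite ln_Rinv in H by assumption. lra.
Qed.

(* Comparison of [(x+1)^(-p-1)] with the integral of [t^(-p-1)] over [x, x+1]. *)
Lemma Rpower_succ_le_telescope x p : 1 <= x -> 0 < p ->
  Rpower (x + 1) (- p - 1) <= / p * (Rpower x (- p) - Rpower (x + 1) (- p)).
Proof.
  intros Hx Hp. unfold Rpower. set (L0 := ln x). set (L1 := ln (x + 1)).
  assert (Hd : / (x + 1) <= L1 - L0).
  { unfold L1, L0. rewrite <- ln_div by lra.
    replace (/ (x + 1)) with (1 - / ((x + 1) / x)) by (field; lra).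
    apply ln_ge_1_sub_inv. apply Rdiv_lt_0_compat; lra. }
  assert (E1 : exp ((- p - 1) * L1) = exp (- p * L1) * / (x + 1)).
  { replace ((- p - 1) * L1) with (- p * L1 + - L1) by ring.
    rewrite exp_plus, exp_Ropp. unfold L1. rewrite exp_ln by lra. reflexivity. }
  assert (E2 : exp (- p * L0) = exp (- p * L1) * exp (p * (L1 - L0))).
  { rewrite <- exp_plus. f_equal. ring. }
  rewrite E1, E2. pose proof (exp_ineq1_le (p * (L1 - L0))).
  set (b := exp (- p * L1)). assert (0 < b) by apply exp_pos.
  set (E := exp (p * (L1 - L0))) in *.
  assert (p * / (x + 1) <= p * (L1 - L0)) by (apply Rmult_le_compat_l; lra).
  replace (/ p * (b * E - b)) with (b * ((E - 1) * / p)) by ring.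
  apply Rmult_le_compat_l; [lra|].
  replace (/ (x + 1)) with (p * / (x + 1) * / p) by (field; lra).
  apply Rmult_le_compat_r; [left; apply Rinv_0_lt_compat|]; lra.
Qed.

Lemma sum_n_Rpower_le t N : t < -1 ->
  sum_n (fun j => Rpower (INR (S j)) t) N <= 1 + / (- t - 1).
Proof.
  intros Ht. set (p := - t - 1). assert (Hp : 0 < p) by (unfold p; lra).
  assert (Hinv : 0 < / p) by (apply Rinv_0_lt_compat; assumption).
  enough (Hsum : sum_n (fun j => Rpower (INR (S j)) t) N
                 <= 1 + / p * (1 - Rpower (INR (S N)) (t + 1)))
    by (assert (0 <= / p * Rpower (INR (S N)) (t + 1))
          by (apply Rmult_le_pos; [lra | left; apply exp_pos]); lra).
  induction N as [|N IH].
  - rewrite sum_O. replace (INR 1) with 1 by reflexivity.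
    unfold Rpower. rewrite ln_1, !Rmult_0_r, exp_0. lra.
  - rewrite sum_Sn. change (sum_n (fun j => Rpower (INR (S j)) t) N + Rpower (INR (S (S N))) t <=
      1 + / p * (1 - Rpower (INR (S (S N))) (t + 1))).
    assert (Hstep := Rpower_succ_le_telescope (INR (S N)) p).
    rewrite <- S_INR in Hstep. replace (- p - 1) with t in Hstep by (unfold p; ring).
    replace (- p) with (t + 1) in Hstep by (unfold p; ring).
    assert (H1 : 1 <= INR (S N)) by (apply (le_INR 1); lia). specialize (Hstep H1 Hp). nra.
Qed.

Lemma ex_series_Rpower t : t < -1 -> ex_series (fun j => Rpower (INR (S j)) t).
Proof.
  intros Ht. apply ex_series_nonneg_bounded with (1 + / (- t - 1)).
  - intros; left; apply exp_pos.
  - intros; now apply sum_n_Rpower_le.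
Qed.

Lemma Rpower_le_compat_npos t x y : t <= 0 -> 0 < x -> x <= y -> Rpower y t <= Rpower x t.
Proof.
  intros Ht Hx Hxy. unfold Rpower.
  assert (H : t * ln y <= t * ln x) by (apply Rmult_le_compat_neg_l; [|apply ln_le]; assumption).
  destruct (Rle_lt_or_eq_dec _ _ H) as [Hlt | ->];
    [left; now apply exp_increasing | right; reflexivity].
Qed.

(* Abel summation against decreasing weights. *)
Lemma sum_n_mult_decr_le (u w : nat -> R) K :
  (forall N, sum_n u N <= K * INR (S N)) ->
  (forall j, 0 <= w j) -> (forall j, w (S j) <= w j) ->
  forall N, sum_n (fun j => u j * w j) N <= K * sum_n w N.
Proof.
  intros Hu Hw0 Hw.
  assert (Hs : forall N, sum_n (fun j => u j * w j) N
                         <= K * sum_n w N + (sum_n u N - K * INR (S N)) * w N).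
  { induction N as [|N IH].
    - rewrite !sum_O. simpl INR. lra.
    - rewrite !sum_Sn. change (sum_n (fun j => u j * w j) N + u (S N) * w (S N) <=
         K * (sum_n w N + w (S N)) + (sum_n u N + u (S N) - K * INR (S (S N))) * w (S N)).
      rewrite (S_INR (S N)). specialize (Hu N). specialize (Hw N).
      assert ((sum_n u N - K * INR (S N)) * w N <= (sum_n u N - K * INR (S N)) * w (S N))
        by (apply Rmult_le_compat_neg_l; lra).
      lra. }
  intros N. specialize (Hs N). specialize (Hu N). specialize (Hw0 N).
  assert ((sum_n u N - K * INR (S N)) * w N <= 0) by (apply Rmult_le_0_r; lra). lra.
Qed.

Section RankinSelberg.

Variable A : nat -> nat -> C.
Hypothesis HA : HeckeMaassCoeffs A.

(* Restricting the Rankin--Selberg sum to [m1 = n1] and [X = n1^2 (N+1)], and using [hm_dual]. *)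
Lemma sum_n_Cmod_A_sqr_le n1 : (1 <= n1)%nat ->
  exists K, forall N, sum_n (fun j => Cmod (A (S j) n1) ^ 2) N <= K * INR (S N).
Proof.
  intros Hn1. destruct (hm_rankin_selberg A HA) as [K HK].
  exists (K * INR n1 * INR n1). intros N. set (X := (n1 * n1 * S N)%nat).
  set (row := fun m1 => rsum (seq 1 X)
    (fun m2 => if (m1 * m1 * m2 <=? X)%nat then Cmod (A m1 m2) ^ 2 else 0)).
  assert (Hrow0 : forall m1, 0 <= row m1).
  { intros m1. apply rsum_nonneg. intros. destruct (_ <=? _)%nat; [apply pow2_ge_0|lra]. }
  assert (Hrow : row n1 <= K * INR X).
  { eapply Rle_trans; [|exact (HK X)].
    rewrite fold_right_Rplus_map. erewrite rsum_ext by (intros; apply fold_right_Rplus_map).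
    apply (rsum_ge_term _ row); [intros; apply Hrow0|]. apply in_seq. unfold X. nia. }
  assert (Hhead : row n1 >= rsum (seq 1 (S N)) (fun m2 => Cmod (A n1 m2) ^ 2)).
  { unfold row. replace X with (S N + (X - S N))%nat at 1 by (unfold X; nia).
    rewrite seq_app, rsum_app.
    assert (0 <= rsum (seq (1 + S N) (X - S N))
                  (fun m2 => if (n1 * n1 * m2 <=? X)%nat then Cmod (A n1 m2) ^ 2 else 0)).
    { apply rsum_nonneg. intros. destruct (_ <=? _)%nat; [apply pow2_ge_0|lra]. }
    rewrite (rsum_ext (seq 1 (S N)) _ (fun m2 => Cmod (A n1 m2) ^ 2)); [lra|].
    intros m2 Hm2. apply in_seq in Hm2.
    replace (n1 * n1 * m2 <=? X)%nat with true; [reflexivity|].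
    symmetry. apply Nat.leb_le. unfold X. nia. }
  rewrite sum_n_rsum, <- (rsum_map S _ (fun m2 => Cmod (A m2 n1) ^ 2)), seq_shift.
  rewrite (rsum_ext _ _ (fun m2 => Cmod (A n1 m2) ^ 2))
    by (intros; rewrite (hm_dual A HA), Cmod_conj; reflexivity).
  unfold X in Hrow. rewrite !mult_INR in Hrow. nra.
Qed.

Lemma ex_series_Cmod_A_Rpower n1 u : (1 <= n1)%nat -> u < 0 ->
  ex_series (fun j => Cmod (A (S j) n1) * Rpower (INR (S j)) (u - 1)).
Proof.
  intros Hn1 Hu. destruct (sum_n_Cmod_A_sqr_le n1 Hn1) as [K HK].
  set (w := fun j => Rpower (INR (S j)) (u - 1)).
  assert (Hw0 : forall j, 0 < w j) by (intros; apply exp_pos).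
  assert (Hw : ex_series w) by (apply ex_series_Rpower; lra).
  assert (Hsq : ex_series (fun j => Cmod (A (S j) n1) ^ 2 * w j)).
  { apply ex_series_nonneg_bounded with (Rmax K 0 * (1 + / (- (u - 1) - 1))).
    - intros j. apply Rmult_le_pos; [apply pow2_ge_0|left; apply Hw0].
    - intros N. eapply Rle_trans; [apply (sum_n_mult_decr_le _ w (Rmax K 0))|].
      + intros M. eapply Rle_trans; [apply HK|].
        apply Rmult_le_compat_r; [apply pos_INR|apply Rmax_l].
      + intros; left; apply Hw0.
      + intros j. apply Rpower_le_compat_npos; [lra|apply lt_0_INR; lia|apply le_INR; lia].
      + apply Rmult_le_compat_l; [apply Rmax_r|]. apply sum_n_Rpower_le. lra. }
  (* [|a| w <= (|a|^2 w + w) / 2] *)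
  apply (ex_series_le (V := R_CompleteNormedModule) _
           (fun j => / 2 * (Cmod (A (S j) n1) ^ 2 * w j + w j))).
  - intros j. change (Rabs (Cmod (A (S j) n1) * w j) <= / 2 * (Cmod (A (S j) n1) ^ 2 * w j + w j)).
    specialize (Hw0 j). pose proof (Cmod_ge_0 (A (S j) n1)).
    rewrite Rabs_pos_eq by nra. fold (w j). set (a := Cmod (A (S j) n1)) in *.
    pose proof (Rmult_le_pos ((a - 1) ^ 2) (w j) (pow2_ge_0 _) (Rlt_le _ _ Hw0)). nra.
  - apply (ex_series_scal (V := R_NormedModule) (/ 2)).
    apply (ex_series_plus (V := R_NormedModule)); assumption.
Qed.

End RankinSelberg.

(** * Divisors and residues *)

Lemma in_divisors l c : In c (divisors l) <-> (1 <= c <= l)%nat /\ (l mod c = 0)%nat.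
Proof. unfold divisors. rewrite filter_In, in_seq, Nat.eqb_eq. lia. Qed.

Lemma NoDup_divisors l : NoDup (divisors l).
Proof. apply NoDup_filter, seq_NoDup. Qed.

Lemma divisor_mul_div l c : In c (divisors l) -> (c * (l / c) = l)%nat.
Proof. intros [Hc Hm]%in_divisors. symmetry. apply Nat.Div0.div_exact. assumption. Qed.

Lemma divisor_div_ge1 l c : (1 <= l)%nat -> In c (divisors l) -> (1 <= l / c)%nat.
Proof.
  intros Hl Hc. pose proof (divisor_mul_div l c Hc). destruct (l / c)%nat; lia.
Qed.

Lemma INR_pos n : (1 <= n)%nat -> 0 < INR n.
Proof. intros; apply lt_0_INR; lia. Qed.

Lemma RtoC_INR_neq_0 n : (1 <= n)%nat -> RtoC (INR n) <> 0%C.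
Proof. intros Hn H. injection H as H. revert H. apply not_0_INR. lia. Qed.

(* For [c >= 1], the unique [d] in [[0, c)] with [sgn s * d + m = 0 (mod c)]. *)
Definition sign_residue (s : bool) (c m : nat) : nat :=
  if s then ((c - m mod c) mod c)%nat else (m mod c)%nat.

Lemma sign_residue_lt s c m : (1 <= c)%nat -> (sign_residue s c m < c)%nat.
Proof. intros Hc. unfold sign_residue. destruct s; apply Nat.mod_upper_bound; lia. Qed.

Lemma sign_residue_Z s c m : (1 <= c)%nat ->
  Z.of_nat (sign_residue s c m) = ((- sgn s * Z.of_nat m) mod Z.of_nat c)%Z.
Proof.
  intros Hc. unfold sign_residue. destruct s; simpl sgn; rewrite Nat2Z.inj_mod.
  - pose proof (Nat.mod_upper_bound m c ltac:(lia)). rewrite Nat2Z.inj_sub, Nat2Z.inj_mod by lia.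
    pose proof (Z.div_mod (Z.of_nat m) (Z.of_nat c) ltac:(lia)).
    rewrite <- (Z.mod_add (- (1) * Z.of_nat m) (1 + Z.of_nat m / Z.of_nat c)) by lia.
    f_equal. lia.
  - f_equal. ring.
Qed.

Lemma gcd_sign_residue s c m : (1 <= c)%nat -> Nat.gcd (sign_residue s c m) c = Nat.gcd m c.
Proof.
  intros Hc. unfold sign_residue.
  destruct s; rewrite Nat.Lcm0.gcd_mod, Nat.gcd_comm; [|reflexivity].
  pose proof (Nat.mod_upper_bound m c ltac:(lia)).
  rewrite <- (Nat.gcd_sub_diag_r (c - m mod c) c) by lia.
  replace (c - (c - m mod c))%nat with (m mod c) by lia.
  rewrite Nat.gcd_comm, (Nat.gcd_sub_diag_r (m mod c) c) by lia.
  rewrite Nat.Lcm0.gcd_mod, Nat.gcd_comm. reflexivity.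
Qed.

Lemma sign_residueP (s : bool) (c d m : nat) : (1 <= c)%nat -> (d < c)%nat ->
  (Z.of_nat c | sgn s * Z.of_nat d + Z.of_nat m)%Z <-> d = sign_residue s c m.
Proof.
  intros Hc Hd. rewrite <- Nat2Z.inj_iff, sign_residue_Z by assumption. split.
  - intros [k Hk]. symmetry. apply Znumtheory.Zdivide_mod_minus; [lia|].
    exists (- sgn s * k)%Z.
    transitivity (- sgn s * (sgn s * Z.of_nat d + Z.of_nat m))%Z; [destruct s; cbn [sgn]; ring|].
    rewrite Hk. ring.
  - intros Hx.
    destruct (Znumtheory.Zmod_divide_minus (- sgn s * Z.of_nat m) (Z.of_nat c) (Z.of_nat d)
                ltac:(lia) (eq_sym Hx)) as [k Hk].
    exists (- sgn s * k)%Z.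
    transitivity (- sgn s * (- sgn s * Z.of_nat m - Z.of_nat d))%Z; [destruct s; cbn [sgn]; ring|].
    rewrite Hk. ring.
Qed.

Lemma sign_residue_eqb (s : bool) (c d m : nat) : (1 <= c)%nat -> (d < c)%nat ->
  ((sgn s * Z.of_nat d + Z.of_nat m) mod Z.of_nat c =? 0)%Z = (d =? sign_residue s c m).
Proof.
  intros Hc Hd. apply eq_true_iff_eq.
  rewrite Z.eqb_eq, Nat.eqb_eq, <- sign_residueP, Z.mod_divide by (assumption || lia).
  reflexivity.
Qed.

(* [M] lies in the class of [c | l] iff [M = (l/c) m] with [m] coprime to [c]; the class of [M]
   is [c = l / gcd(M, l)]. *)
Definition gcd_class (l c M : nat) : bool :=
  (M mod (l / c) =? 0) && (Nat.gcd (M / (l / c)) c =? 1).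

Lemma gcd_class_iff l c M : (1 <= l)%nat -> (1 <= M)%nat -> In c (divisors l) ->
  gcd_class l c M = (c =? l / Nat.gcd M l).
Proof.
  intros Hl HM Hc. pose proof (divisor_mul_div l c Hc) as Hq.
  apply in_divisors in Hc as [Hc1 Hc2].
  set (q := (l / c)%nat) in *. assert (Hq1 : (1 <= q)%nat) by (destruct q; lia).
  set (g := Nat.gcd M l).
  assert (Hg : (1 <= g)%nat) by (destruct g eqn:E; [apply Nat.gcd_eq_0 in E|]; lia).
  destruct (Nat.gcd_divide_l M l) as [j Hj]. destruct (Nat.gcd_divide_r M l) as [k Hk].
  fold g in Hj, Hk.
  unfold gcd_class. fold q. destruct (Nat.eqb_spec c (l / g)) as [Ec|Ec].
  - assert (Eqg : q = g).
    { rewrite Hk, Nat.div_mul in Ec by lia. subst c. nia. }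
    rewrite Eqg, Hj, Nat.Div0.mod_mul, Nat.div_mul by lia. simpl.
    apply Nat.eqb_eq. rewrite Ec, Hk, Nat.div_mul by lia.
    assert (Hjk := Nat.gcd_div_gcd M l g ltac:(lia) eq_refl).
    rewrite Hj, Hk, !Nat.div_mul in Hjk by lia. exact Hjk.
  - destruct (Nat.eqb_spec (M mod q) 0) as [Hm|Hm]; [simpl|reflexivity].
    destruct (Nat.eqb_spec (Nat.gcd (M / q) c) 1) as [Hg1|Hg1]; [exfalso|reflexivity].
    apply Ec. assert (HM' : M = (q * (M / q))%nat) by (apply Nat.Div0.div_exact; assumption).
    assert (Egq : g = q).
    { unfold g. rewrite HM', <- Hq, (Nat.mul_comm c q), Nat.gcd_mul_mono_l, Hg1. lia. }
    rewrite Egq, <- Hq, Nat.div_mul; lia.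
Qed.

Lemma div_gcd_in_divisors l M : (1 <= l)%nat -> In (l / Nat.gcd M l)%nat (divisors l).
Proof.
  intros Hl. apply in_divisors. destruct (Nat.gcd_divide_r M l) as [k Hk].
  set (g := Nat.gcd M l) in *.
  assert (1 <= g)%nat by (destruct g eqn:E; [apply Nat.gcd_eq_0 in E|]; lia).
  rewrite Hk, Nat.div_mul by lia. split; [nia|]. rewrite Nat.mul_comm. apply Nat.Div0.mod_mul.
Qed.

Section KloostermanRow.

Variable A : nat -> nat -> C.
Hypothesis HA : HeckeMaassCoeffs A.
Variable w2 : C.
Hypothesis hu2 : Re w2 < 0.

Definition krow_term (n1 q : nat) (sg a : Z) (j : nat) : C :=
  (A (S j) n1 * cpow (INR (S j)) (w2 - 1) * Kloosterman a (sg * Z.of_nat (S j)) q)%C.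

Definition krow (n1 q : nat) (sg a : Z) : C := CSeries (krow_term n1 q sg a).

Lemma ex_series_Cmod_krow_term n1 q sg a : (1 <= n1)%nat ->
  ex_series (fun j => Cmod (krow_term n1 q sg a j)).
Proof.
  intros Hn1.
  apply (ex_series_le (V := R_CompleteNormedModule) _
           (fun j => INR q * INR q * (Cmod (A (S j) n1) * Rpower (INR (S j)) (Re w2 - 1)))).
  - intros j. change (Rabs (Cmod (krow_term n1 q sg a j))
                      <= INR q * INR q * (Cmod (A (S j) n1) * Rpower (INR (S j)) (Re w2 - 1))).
    rewrite Rabs_pos_eq by apply Cmod_ge_0. unfold krow_term.
    rewrite !Cmod_mult, Cmod_cpow_sub_1, Rmult_comm.
    apply Rmult_le_compat; [apply Cmod_ge_0| |apply Cmod_Kloosterman_le|lra].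
    apply Rmult_le_pos; [apply Cmod_ge_0|left; apply exp_pos].
  - apply (ex_series_scal (V := R_NormedModule)). now apply ex_series_Cmod_A_Rpower.
Qed.

Lemma is_series_krow n1 q sg a : (1 <= n1)%nat ->
  is_series (krow_term n1 q sg a) (krow n1 q sg a).
Proof. intros Hn1. now apply is_series_CSeries_Cmod, ex_series_Cmod_krow_term. Qed.

Lemma krow_mod n1 q sg a a' : (1 <= q)%nat -> (Z.of_nat q | a - a')%Z ->
  krow n1 q sg a = krow n1 q sg a'.
Proof.
  intros Hq Hd. apply CSeries_ext. intros j. unfold krow_term. f_equal.
  now apply Kloosterman_mod_l.
Qed.

Definition krow_bound (n1 q : nat) (sg : Z) : R :=
  rsum (seq 0 q) (fun r => Cmod (krow n1 q sg (Z.of_nat r))).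

Lemma Cmod_krow_le n1 q sg M : (1 <= q)%nat ->
  Cmod (krow n1 q sg (Z.of_nat M)) <= krow_bound n1 q sg.
Proof.
  intros Hq. rewrite (krow_mod n1 q sg (Z.of_nat M) (Z.of_nat (M mod q))); [|assumption|].
  2:{ rewrite Nat2Z.inj_mod. exists (Z.of_nat M / Z.of_nat q)%Z.
      pose proof (Z.div_mod (Z.of_nat M) (Z.of_nat q)). lia. }
  apply (rsum_ge_term _ (fun r => Cmod (krow n1 q sg (Z.of_nat r)))); [intros; apply Cmod_ge_0|].
  apply in_seq. pose proof (Nat.mod_upper_bound M q). lia.
Qed.

End KloostermanRow.

(** * The right-hand side as a Dirichlet-type series *)

Section RightHandSide.

Variable A : nat -> nat -> C.
Hypothesis HA : HeckeMaassCoeffs A.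
Variable l : nat.
Hypothesis hl : (1 <= l)%nat.
Variables w1 w2 : C.
Hypothesis hu1 : Re w1 < 0.
Hypothesis hu2 : Re w2 < 0.
Variable sg : Z.

Definition rhs_term (n1 i : nat) : C :=
  (cpow (INR (S i)) (w1 - 1) * cpow (INR n1) (2 * w2 - 1) *
   krow A w2 n1 (l / n1) sg (Z.of_nat (S i)))%C.

Definition rhs_coeff (M : nat) : C :=
  (cpow (INR l) (1 - w1 - w2) *
   csum (divisors l) (fun n1 =>
     cpow (INR M) (w1 - 1) * cpow (INR n1) (2 * w2 - 1) * krow A w2 n1 (l / n1) sg (Z.of_nat M)))%C.

Lemma Cmod_rhs_term_le n1 i : In n1 (divisors l) ->
  Cmod (rhs_term n1 i) <=
  Rpower (INR (S i)) (Re w1 - 1) *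
  (Cmod (cpow (INR n1) (2 * w2 - 1)) * krow_bound A w2 n1 (l / n1) sg).
Proof.
  intros Hn1. unfold rhs_term. rewrite !Cmod_mult, Cmod_cpow_sub_1, Rmult_assoc.
  apply Rmult_le_compat_l; [left; apply exp_pos|].
  apply Rmult_le_compat_l; [apply Cmod_ge_0|].
  apply Cmod_krow_le. now apply divisor_div_ge1.
Qed.

Lemma ex_series_Cmod_rhs_term n1 : In n1 (divisors l) ->
  ex_series (fun i => Cmod (rhs_term n1 i)).
Proof.
  intros Hn1.
  apply (ex_series_le (V := R_CompleteNormedModule) _ (fun i => scal
    (Cmod (cpow (INR n1) (2 * w2 - 1)) * krow_bound A w2 n1 (l / n1) sg)
    (Rpower (INR (S i)) (Re w1 - 1)))).
  - intros i. change (Rabs (Cmod (rhs_term n1 i)) <=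
      Cmod (cpow (INR n1) (2 * w2 - 1)) * krow_bound A w2 n1 (l / n1) sg
      * Rpower (INR (S i)) (Re w1 - 1)).
    rewrite Rabs_pos_eq by apply Cmod_ge_0.
    rewrite Rmult_comm. now apply Cmod_rhs_term_le.
  - apply (ex_series_scal (V := R_NormedModule)). apply ex_series_Rpower. lra.
Qed.

Lemma is_series_rhs_coeff :
  is_series (fun i => rhs_coeff (S i))
    (cpow (INR l) (1 - w1 - w2) * csum (divisors l) (fun n1 => CSeries (rhs_term n1)))%C.
Proof.
  apply is_series_Cmult_l, (is_series_csum (divisors l) rhs_term).
  intros n1 Hn1. now apply is_series_CSeries_Cmod, ex_series_Cmod_rhs_term.
Qed.

Lemma ex_series_Cmod_rhs_coeff : ex_series (fun i => Cmod (rhs_coeff (S i))).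
Proof.
  set (B := Cmod (cpow (INR l) (1 - w1 - w2)) * rsum (divisors l) (fun n1 =>
              Cmod (cpow (INR n1) (2 * w2 - 1)) * krow_bound A w2 n1 (l / n1) sg)).
  apply (ex_series_le (V := R_CompleteNormedModule) _
           (fun i => scal B (Rpower (INR (S i)) (Re w1 - 1)))).
  - intros i. change (Rabs (Cmod (rhs_coeff (S i))) <= B * Rpower (INR (S i)) (Re w1 - 1)).
    rewrite Rabs_pos_eq by apply Cmod_ge_0.
    change (rhs_coeff (S i)) with
      (cpow (INR l) (1 - w1 - w2) * csum (divisors l) (fun n1 => rhs_term n1 i))%C.
    unfold B. rewrite Cmod_mult, Rmult_assoc.
    apply Rmult_le_compat_l; [apply Cmod_ge_0|]. rewrite <- rsum_scal_r.
    eapply Rle_trans; [apply Cmod_csum_le|]. apply rsum_le. intros n1 Hn1.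
    rewrite Rmult_comm. now apply Cmod_rhs_term_le.
  - apply (ex_series_scal (V := R_NormedModule)). apply ex_series_Rpower. lra.
Qed.

Lemma rhs_summand_factor (a K : C) m n1 n2 : (1 <= m)%nat -> (1 <= n1)%nat -> (1 <= n2)%nat ->
  (a / (cpow (INR m) (1 - w1) * cpow (INR n2) (1 - w2) * cpow (INR n1) (1 - 2 * w2)) * K)%C =
  (cpow (INR m) (w1 - 1) * cpow (INR n1) (2 * w2 - 1) * (a * cpow (INR n2) (w2 - 1) * K))%C.
Proof.
  intros Hm Hn1 Hn2.
  rewrite !cpow_1_sub, !cpow_sub_1, !cpow_2w by (apply INR_pos; assumption).
  field. repeat split; first [apply cpow_neq_0 | apply RtoC_INR_neq_0; assumption].
Qed.

Lemma is_series_rhs :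
  is_series (fun i => rhs_coeff (S i))
    (cpow (INR l) (1 - w1 - w2) *
     csum (divisors l) (fun n1 =>
       CSeries (fun i => let m := S i in
         CSeries (fun j => let n2 := S j in
           A n2 n1 / (cpow (INR m) (1 - w1) * cpow (INR n2) (1 - w2) * cpow (INR n1) (1 - 2 * w2))
           * Kloosterman (Z.of_nat m) (sg * Z.of_nat n2) (l / n1)))))%C.
Proof.
  erewrite csum_ext; [apply is_series_rhs_coeff|]. intros n1 Hn1. cbv zeta.
  apply in_divisors in Hn1 as [Hn1 _]. apply CSeries_ext. intros i. unfold rhs_term.
  rewrite <- (CSeries_Cmult_l _ _ _
                (is_series_krow A HA w2 hu2 n1 (l / n1) sg (Z.of_nat (S i)) ltac:(lia))).
  apply CSeries_ext. intros j. apply rhs_summand_factor; lia.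
Qed.

End RightHandSide.

(** * Unfolding the left-hand side *)

(* By orthogonality, [Xi(c, k; -w) = c^(-w) sum_(m >= 1, m = -k mod c) c / m^(1-w)]. *)
Definition Xi_term (c : nat) (k : Z) (w : C) (i : nat) : C :=
  if ((k + Z.of_nat (S i)) mod Z.of_nat c =? 0)%Z
  then (cpow (INR c) (- w) * (RtoC (INR c) / cpow (INR (S i)) (1 - w)))%C
  else 0%C.

Lemma is_series_Xi c k w : (1 <= c)%nat -> Re w < 0 -> is_series (Xi_term c k w) (Xi c k w).
Proof.
  intros Hc Hw. unfold Xi.
  set (inner := fun b j => (e (INR (b * S j) / INR c) / cpow (INR (S j)) (1 - w))%C).
  assert (Hinner : forall b, is_series (inner b) (CSeries (inner b))).
  { intros b. apply is_series_CSeries_Cmod.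
    apply (ex_series_le (V := R_CompleteNormedModule) _ (fun j => Rpower (INR (S j)) (Re w - 1)));
      [|apply ex_series_Rpower; lra].
    intros j. change (Rabs (Cmod (inner b j)) <= Rpower (INR (S j)) (Re w - 1)).
    rewrite Rabs_pos_eq by apply Cmod_ge_0. unfold inner, Cdiv.
    rewrite Cinv_cpow_1_sub, Cmod_mult, Cmod_e, Cmod_cpow_sub_1. lra. }
  eapply is_series_ext; [|apply is_series_Cmult_l, (is_series_csum (seq 0 c)
    (fun b j => e (IZR (Z.of_nat b * k) / INR c) * inner b j)%C); intros b _;
    apply is_series_Cmult_l, Hinner].
  intros j. cbv beta. rewrite (csum_ext _ _ (fun b =>
    e (IZR (Z.of_nat b * (k + Z.of_nat (S j))) / INR c) * / cpow (INR (S j)) (1 - w))%C).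
  - rewrite csum_scal_r, csum_e_mod by assumption. unfold Xi_term.
    destruct (_ =? 0)%Z; [reflexivity|]. rewrite Cmult_0_l, Cmult_0_r. reflexivity.
  - intros b _. unfold inner, Cdiv. rewrite Cmult_assoc, e_add. do 2 f_equal.
    rewrite (INR_IZR_INZ (b * S j)), Nat2Z.inj_mul, Z.mul_add_distr_l, plus_IZR.
    field. apply not_0_INR. lia.
Qed.

(* [rel_sign s1 s2] is the sign written [mp_1 pm_2] in the statement. *)
Definition rel_sign (s1 s2 : bool) : Z := (- (sgn s1 * sgn s2))%Z.

Section LeftHandSide.

Variable A : nat -> nat -> C.
Hypothesis HA : HeckeMaassCoeffs A.
Variable l : nat.
Hypothesis hl : (1 <= l)%nat.
Variables w1 w2 : C.
Hypothesis hu1 : Re w1 < 0.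
Hypothesis hu2 : Re w2 < 0.
Variables s1 s2 : bool.

Definition XiF_weight (c L n1 : nat) : C :=
  (cpow (INR n1 ^ 2 / (INR c ^ 3 * INR L)) w2 / INR n1)%C.

(* The value of [Xi_F(c, pm_2 d, l/c; -w2)] when [pm_1 d = -m (mod c)]: it depends only on
   [(l/c) m]. *)
Definition XiF_value (c m : nat) : C :=
  (INR c * csum (divisors l) (fun n1 =>
     XiF_weight c (l / c) n1 * krow A w2 n1 (l / n1) (rel_sign s1 s2) (Z.of_nat ((l / c) * m))))%C.

Lemma XiF_eq_value c d m : In c (divisors l) ->
  (Z.of_nat c | sgn s1 * Z.of_nat d + Z.of_nat m)%Z ->
  XiF A c (sgn s2) (Z.of_nat d) (l / c) w2 = XiF_value c m.
Proof.
  intros Hc [t Ht]. pose proof (divisor_mul_div l c Hc) as HcL.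
  assert (HL := divisor_div_ge1 l c hl Hc). apply in_divisors in Hc as [Hc _].
  set (L := (l / c)%nat) in *.
  unfold XiF, XiF_value. rewrite HcL. f_equal. apply csum_ext. intros n1 Hn1.
  pose proof (divisor_mul_div l n1 Hn1) as Hnq. assert (Hq := divisor_div_ge1 l n1 hl Hn1).
  apply in_divisors in Hn1 as [Hn1 _]. set (q := (l / n1)%nat) in *.
  rewrite <- (CSeries_Cmult_l _ _ _ (is_series_krow A HA w2 hu2 n1 q (rel_sign s1 s2)
    (Z.of_nat (L * m)) ltac:(lia))).
  apply CSeries_ext. intros j. cbv zeta. unfold krow_term.
  assert (Hdiv : (Z.of_nat q | sgn s1 * (Z.of_nat d * Z.of_nat L) + Z.of_nat (L * m))%Z).
  { exists (t * Z.of_nat n1)%Z.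
    transitivity (Z.of_nat L * (sgn s1 * Z.of_nat d + Z.of_nat m))%Z;
      [rewrite Nat2Z.inj_mul; ring|].
    rewrite Ht. assert (Z.of_nat c * Z.of_nat L = Z.of_nat n1 * Z.of_nat q)%Z
      by (rewrite <- !Nat2Z.inj_mul, HcL, Hnq; reflexivity).
    rewrite <- Z.mul_assoc, <- H. ring. }
  rewrite (Kloosterman_sign_move q s1 _ _ _ Hq Hdiv).
  replace (- sgn s1 * (sgn s2 * Z.of_nat (S j)))%Z with (rel_sign s1 s2 * Z.of_nat (S j))%Z
    by (unfold rel_sign; ring).
  assert (Hpos : 0 < INR n1 ^ 2 / (INR c ^ 3 * INR L)).
  { apply Rdiv_lt_0_compat; [apply pow_lt, INR_pos; lia|].
    apply Rmult_lt_0_compat; [apply pow_lt|]; apply INR_pos; lia. }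
  replace (INR (S j) * INR n1 ^ 2 / (INR c ^ 3 * INR L))
    with (INR (S j) * (INR n1 ^ 2 / (INR c ^ 3 * INR L))) by (unfold Rdiv; ring).
  rewrite cpow_mul, cpow_sub_1 by first [assumption | apply INR_pos; lia].
  unfold XiF_weight. fold L. rewrite RtoC_mult. field.
  split; apply RtoC_INR_neq_0; lia.
Qed.

Lemma csum_units_Xi_XiF c i : In c (divisors l) ->
  csum (units_mod c) (fun d =>
    Xi_term c (sgn s1 * Z.of_nat d) w1 i * XiF A c (sgn s2) (Z.of_nat d) (l / c) w2)%C =
  if Nat.gcd (S i) c =? 1
  then (cpow (INR c) (- w1) * (INR c / cpow (INR (S i)) (1 - w1)) * XiF_value c (S i))%C
  else 0%C.
Proof.
  intros Hc. assert (Hc1 : (1 <= c)%nat) by (apply in_divisors in Hc; lia).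
  set (v := if Nat.gcd (S i) c =? 1
            then (cpow (INR c) (- w1) * (INR c / cpow (INR (S i)) (1 - w1)) * XiF_value c (S i))%C
            else 0%C).
  unfold units_mod. rewrite csum_filter.
  rewrite (csum_ext _ _ (fun d => if d =? sign_residue s1 c (S i) then v else 0%C)).
  - apply csum_indicator; [apply seq_NoDup|]. apply in_seq.
    pose proof (sign_residue_lt s1 c (S i) Hc1). lia.
  - intros d Hd. apply in_seq in Hd. unfold Xi_term.
    rewrite sign_residue_eqb by lia.
    destruct (Nat.eqb_spec d (sign_residue s1 c (S i))) as [->|Hne].
    + rewrite gcd_sign_residue by assumption. unfold v.
      destruct (Nat.gcd (S i) c =? 1); [|reflexivity].
      f_equal. apply XiF_eq_value; [assumption|].
      apply sign_residueP; [assumption|apply sign_residue_lt; assumption|reflexivity].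
    + destruct (Nat.gcd d c =? 1); [apply Cmult_0_l|reflexivity].
Qed.

Lemma lhs_coeff_factor c m : In c (divisors l) -> (1 <= m)%nat ->
  (cpow (INR c) (2 * w2 - 1) *
   (cpow (INR c) (- w1) * (INR c / cpow (INR m) (1 - w1)) * XiF_value c m))%C =
  rhs_coeff A l w1 w2 (rel_sign s1 s2) ((l / c) * m).
Proof.
  intros Hc Hm. pose proof (divisor_mul_div l c Hc) as HcL.
  assert (HL := divisor_div_ge1 l c hl Hc). apply in_divisors in Hc as [Hc _].
  set (L := (l / c)%nat) in *.
  assert (Pc := INR_pos c ltac:(lia)). assert (PL := INR_pos L HL). assert (Pm := INR_pos m Hm).
  unfold XiF_value, rhs_coeff. fold L. rewrite <- !csum_scal_l. apply csum_ext.
  intros n1 Hn1. apply in_divisors in Hn1 as [Hn1 _]. assert (Pn := INR_pos n1 ltac:(lia)).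
  unfold XiF_weight. rewrite cpow_sqr_div_cube by assumption.
  replace (INR l) with (INR c * INR L) by (rewrite <- mult_INR, HcL; reflexivity).
  rewrite mult_INR, !cpow_sub, !cpow_2w, cpow_opp, !cpow_mul, !cpow_1
    by (try apply Rmult_lt_0_compat; assumption).
  field.
  repeat split; first [apply cpow_neq_0 | apply RtoC_INR_neq_0; lia].
Qed.

Definition gcd_part (c M : nat) : C :=
  if gcd_class l c M then rhs_coeff A l w1 w2 (rel_sign s1 s2) M else 0%C.

Lemma csum_gcd_part M : (1 <= M)%nat ->
  csum (divisors l) (fun c => gcd_part c M) = rhs_coeff A l w1 w2 (rel_sign s1 s2) M.
Proof.
  intros HM. unfold gcd_part.
  rewrite (csum_ext _ _ (fun c => if c =? l / Nat.gcd M l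
                                  then rhs_coeff A l w1 w2 (rel_sign s1 s2) M else 0%C)).
  - apply csum_indicator; [apply NoDup_divisors|]. now apply div_gcd_in_divisors.
  - intros c Hc. now rewrite gcd_class_iff.
Qed.

Lemma is_series_lhs_divisor_term c : In c (divisors l) ->
  is_series (fun i => gcd_part c (S i))
    (cpow (INR c) (2 * w2 - 1) *
     csum (units_mod c) (fun d =>
       Xi c (sgn s1 * Z.of_nat d) w1 * XiF A c (sgn s2) (Z.of_nat d) (l / c) w2))%C.
Proof.
  intros Hc. assert (HL := divisor_div_ge1 l c hl Hc).
  assert (Hc1 : (1 <= c)%nat) by (apply in_divisors in Hc; lia).
  set (L := (l / c)%nat) in *.
  assert (Hsupp : forall M, M mod L <> 0%nat -> gcd_part c M = 0%C).
  { intros M HM. unfold gcd_part, gcd_class. fold L. apply Nat.eqb_neq in HM. now rewrite HM. }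
  assert (Habs : is_series (fun i => gcd_part c (S i)) (CSeries (fun i => gcd_part c (S i)))).
  { apply is_series_CSeries_Cmod.
    apply (ex_series_le (V := R_CompleteNormedModule) _
             (fun i => Cmod (rhs_coeff A l w1 w2 (rel_sign s1 s2) (S i))));
      [|now apply ex_series_Cmod_rhs_coeff].
    intros i. change (Rabs (Cmod (gcd_part c (S i)))
                      <= Cmod (rhs_coeff A l w1 w2 (rel_sign s1 s2) (S i))).
    rewrite Rabs_pos_eq by apply Cmod_ge_0. unfold gcd_part.
    destruct (gcd_class l c (S i)); [lra|]. rewrite Cmod_0. apply Cmod_ge_0. }
  (* Along the multiples [M = L m], the series is the [m]-series of [Xi] against [XiF]. *)
  assert (Hmul : is_series (fun i => gcd_part c (L * S i)%nat)
    (cpow (INR c) (2 * w2 - 1) *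
     csum (units_mod c) (fun d =>
       Xi c (sgn s1 * Z.of_nat d) w1 * XiF A c (sgn s2) (Z.of_nat d) L w2))%C).
  { eapply is_series_ext; [|apply is_series_Cmult_l, (is_series_csum (units_mod c) (fun d i =>
      Xi_term c (sgn s1 * Z.of_nat d) w1 i * XiF A c (sgn s2) (Z.of_nat d) (l / c) w2)%C);
      intros d _; apply is_series_Cmult_r, is_series_Xi; assumption].
    intros i. cbv beta. rewrite csum_units_Xi_XiF by assumption.
    unfold gcd_part, gcd_class. fold L.
    rewrite (Nat.mul_comm L (S i)), Nat.Div0.mod_mul, Nat.div_mul, Nat.eqb_refl by lia.
    destruct (Nat.gcd (S i) c =? 1); [|apply Cmult_0_r].
    rewrite lhs_coeff_factor by (assumption || lia). fold L. now rewrite Nat.mul_comm. }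
  rewrite (is_series_C_unique _ _ _ Hmul (is_series_mul_index _ L _ HL Hsupp Habs)).
  exact Habs.
Qed.

End LeftHandSide.

Theorem mainTheorem5 (A : nat -> nat -> C) (HA : HeckeMaassCoeffs A)
  (l : nat) (hl : (1 <= l)%nat) (w1 w2 : C) (hu1 : Re w1 < 0) (hu2 : Re w2 < 0)
  (s1 s2 : bool) :
  csum (divisors l) (fun c =>
    Cmult (cpow (INR c) (Cminus (Cmult (RtoC 2) w2) (RtoC 1)))
      (csum (units_mod c) (fun d =>
         Cmult (Xi c (sgn s1 * Z.of_nat d) w1)
               (XiF A c (sgn s2) (Z.of_nat d) (l / c) w2))))
  =
  Cmult (cpow (INR l) (Cminus (Cminus (RtoC 1) w1) w2))
    (csum (divisors l) (fun n1 =>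
       CSeries (fun i => let m := S i in
         CSeries (fun j => let n2 := S j in
           Cmult
             (Cdiv (A n2 n1)
                (Cmult (Cmult (cpow (INR m) (Cminus (RtoC 1) w1))
                              (cpow (INR n2) (Cminus (RtoC 1) w2)))
                       (cpow (INR n1) (Cminus (RtoC 1) (Cmult (RtoC 2) w2)))))
             (Kloosterman (Z.of_nat m) (- (sgn s1 * sgn s2) * Z.of_nat n2) (l / n1)))))).
Proof.
  apply (is_series_C_unique (fun i => rhs_coeff A l w1 w2 (rel_sign s1 s2) (S i))).
  - apply is_series_ext with
      (fun i => csum (divisors l) (fun c => gcd_part A l w1 w2 s1 s2 c (S i))).
    { intros i. apply csum_gcd_part; lia. }
    apply (is_series_csum (divisors l) (fun c i => gcd_part A l w1 w2 s1 s2 c (S i))).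
    intros c Hc. now apply is_series_lhs_divisor_term.
  - exact (is_series_rhs A HA l hl w1 w2 hu1 hu2 (rel_sign s1 s2)).
Qed.
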